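(* Let $H$ be a subgroup of a direct product $H_1\times\dots\times H_r$ of finite groups, and let $g\in H$ be an involution. For $i=1,\dots,r$ let $L_i$ be the projection of $H$ to $H_i\times H_{i+1}\times\dots\times H_r$ (so $L_1=H$), and let $g_i$ be the image of $g$ in $L_i$. For $i=1,\dots,r-1$ let $\psi_i:L_i\to L_{i+1}$ be the canonical projection and $T_i=\ker\psi_i$; set $T_r=L_r$. Suppose that there is $k\leq r$ such that $|T_i|$ is odd for all $i<k$ and $|T_k|$ is even; if $k<r$ suppose further that $g_{k+1}=1$. Let $P$ be a Sylow $2$-subgroup of $T_k$. Then $$|H:C_H(g)|=\left(\prod_{i=1}^{k}|T_i:C_{T_i}(g_i)|\right)\frac{|(g_k)^{L_k}\cap P|}{|(g_k)^{T_k}\cap P|}.$$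
   Context: $x^K$ denotes the set of $K$-conjugates of $x$; $C_{T_i}(g_i)$ is the centralizer in the normal subgroup $T_i\trianglelefteq L_i$ of $g_i\in L_i$. *)

From HB Require Import structures.
From mathcomp Require Import all_boot all_order all_algebra all_fingroup all_solvable.
Set Implicit Arguments.
Unset Strict Implicit.
Unset Printing Implicit Defensive.

Local Open Scope group_scope.

(* The direct product H_1 x ... x H_r is modelled as an internal direct
   product of subgroups Hs 1, ..., Hs r of a finite group gT. *)

Definition headp (gT : finGroupType) (Hs : nat -> {group gT}) (i : nat) : {set gT} :=
  (\prod_(1 <= j < i) Hs j)%g.

Definition tailp (gT : finGroupType) (Hs : nat -> {group gT}) (r i : nat) : {set gT} :=
  (\prod_(i <= j < r.+1) Hs j)%g.

Definition proj (gT : finGroupType) (Hs : nat -> {group gT}) (r i : nat) (x : gT) : gT :=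
  remgr (headp Hs i) (tailp Hs r i) x.

Definition Lsub (gT : finGroupType) (Hs : nat -> {group gT}) (r : nat)
    (H : {set gT}) (i : nat) : {set gT} :=
  proj Hs r i @: H.

Definition Tker (gT : finGroupType) (Hs : nat -> {group gT}) (r : nat)
    (H : {set gT}) (i : nat) : {set gT} :=
  if (i < r)%N then [set x in Lsub Hs r H i | proj Hs r i.+1 x == 1]
  else Lsub Hs r H i.

From HB Require Import structures.
From mathcomp Require Import all_boot all_order all_algebra all_fingroup all_solvable.
Import GRing.Theory.
Local Open Scope group_scope.

(* Let L_i, T_i, g_i be as in the statement and write b_i = |L_i : C_(L_i)(g_i)|,
   a_i = |T_i : C_(T_i)(g_i)|.  The proof has two ingredients.
   1. Odd kernel step: if f is a morphism on L whose kernel K has odd order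
      and g is an involution, then f^-1(C_(f L)(f g)) = C_L(g) K, hence
      |L : C_L(g)| = |K : C_K(g)| |f L : C_(f L)(f g)|.  The point is that
      t = g g^x lies in K and is inverted by g, so its square root u in <t>
      (which exists since t has odd order) satisfies g^u = g^x.
      Applied to psi_i : L_i -> L_(i+1) this gives b_i = a_i b_(i+1) for i < k.
   2. Sylow counting: for T normal in L and P a Sylow subgroup of T, the class
      g^L is a union of T-classes, all of the size of g^T and all meeting P
      in as many points as g^T (Sylow subgroups of T are T-conjugate), so
      |g^L| |g^T :&: P| = |g^T| |g^L :&: P|.  Applied to T_k <| L_k this gives
      b_k = a_k |g_k^L_k :&: P| / |g_k^T_k :&: P|. *)

Section Involutions.
Variable gT : finGroupType.
Implicit Types a b g t u : gT.

Lemma invg_involution g : g ^+ 2 = 1 -> g^-1 = g.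
Proof. by move=> g2; apply/eqP; rewrite eq_invg_mul -expg2 g2. Qed.

Lemma involution_prod_inverted a b :
  a ^+ 2 = 1 -> b ^+ 2 = 1 -> (a * b) ^ a = (a * b)^-1.
Proof.
move=> a2 b2; rewrite /conjg invMg !invg_involution // !mulgA -expg2 a2.
by rewrite mul1g.
Qed.

Lemma conjg_inverted g u : g ^+ 2 = 1 -> u ^ g = u^-1 -> g ^ u = g * u ^+ 2.
Proof.
move=> g2 ug; rewrite /conjg -ug /conjg invg_involution // !mulgA.
by rewrite -(mulgA _ g g) -expg2 g2 mulg1.
Qed.

Lemma odd_order_sqrt t : odd #[t] -> (t ^+ (#[t].+1)./2) ^+ 2 = t.
Proof.
move=> odd_t; have half2 : ((#[t].+1)./2.*2 = #[t].+1)%N.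
  by rewrite -[RHS]odd_double_half /= odd_t.
by rewrite -expgM muln2 half2 expgSr expg_order mul1g.
Qed.

End Involutions.

Section OddKernel.
Variables (gT rT : finGroupType) (L : {group gT}) (f : {morphism L >-> rT}).
Variable g : gT.
Hypotheses (Lg : g \in L) (g2 : g ^+ 2 = 1) (oddK : odd #|'ker f|).

Lemma odd_kernel_cent_lift : f @*^-1 'C_(f @* L)[f g] = 'C_L[g] * 'ker f.
Proof.
apply/eqP; rewrite eqEsubset; apply/andP; split; last first.
  apply/subsetP=> _ /mulsgP[c k /setIP[Lc /cent1P cg] Kk ->].
  have Lk : k \in L by case/morphpreP: Kk.
  apply/morphpreP; split; first by rewrite groupM.
  rewrite morphM // (mker Kk) mulg1 inE mem_morphim //=.
  by apply/cent1P; rewrite /commute -!morphM // cg.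
apply/subsetP=> x /morphpreP[Lx /setIP[_ /cent1P cx]].
pose t := g * g ^ x.
have Kt : t \in 'ker f.
  rewrite !inE groupM ?groupJ //= morphM ?groupJ // morphJ //.
  by rewrite /conjg -cx mulKg -morphM // -expg2 g2 morph1.
have tg : t ^ g = t^-1.
  by apply: involution_prod_inverted; rewrite // -conjXg g2 conj1g.
pose u := t ^+ (#[t].+1)./2.
have Ku : u \in 'ker f by rewrite groupX.
have Lu : u \in L by case/morphpreP: Ku.
have gu : g ^ u = g ^ x.
  rewrite conjg_inverted ?odd_order_sqrt ?(dvdn_odd (order_dvdG Kt)) //.
    by rewrite mulgA -expg2 g2 mul1g.
  by rewrite conjXg tg expVgn.
rewrite -(mulgKV u x); apply: mem_mulg => //.
rewrite inE groupM ?groupV //= cent1C; apply/cent1P/commgP/conjg_fixP.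
by rewrite conjgM -gu conjgK.
Qed.

Lemma index_cent_odd_kernel :
  #|L : 'C_L[g]| =
    (#|'ker f : 'C_('ker f)[g]| * #|f @* L : 'C_(f @* L)[f g]|)%N.
Proof.
have sKL : 'ker f \subset L := subsetIl _ _.
have sML : f @*^-1 'C_(f @* L)[f g] \subset L := morphpre_sub _ _.
have sCM : 'C_L[g] \subset f @*^-1 'C_(f @* L)[f g].
  by rewrite odd_kernel_cent_lift mulG_subl.
rewrite -(Lagrange_index sML sCM) mulnC; congr (_ * _)%N.
  by rewrite /= odd_kernel_cent_lift indexMg -indexgI setIA (setIidPl sKL).
by rewrite -(index_morphpre _ (subxx (f @* L))) morphimGK.
Qed.

End OddKernel.

Lemma card_cover_meet (T : finType) (Part : {set {set T}}) (Q : {set T})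
    (n : nat) :
  trivIset Part -> {in Part, forall B, #|B :&: Q| = n} ->
  #|cover Part :&: Q| = (#|Part| * n)%N.
Proof.
move=> tiPart meetQ.
have cardI A : #|A :&: Q| = (\sum_(x in A | x \in Q) 1)%N.
  by rewrite -sum1_card; apply: eq_bigl => x; rewrite inE.
rewrite -sum_nat_const cardI big_trivIset_cond //.
by apply: eq_bigr => B PB; rewrite -(meetQ B PB) cardI.
Qed.

Section ClassesAndSylow.
Context {gT : finGroupType}.
Implicit Types (T L P : {group gT}) (A : {set gT}).

Lemma class_conj_norm T x l : l \in 'N(T) -> (x ^ l) ^: T = (x ^: T) :^ l.
Proof. by move=> nTl; rewrite -class_lcoset -norm_rlcoset // class_rcoset. Qed.

(* A T-invariant set A meets a Sylow subgroup P of T as often as any of its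
   conjugates under 'N(T) does, because P :^ l^-1 is a T-conjugate of P. *)
Lemma card_meet_Sylow_conj p T P A l :
  p.-Sylow(T) P -> T \subset 'N(A) -> l \in 'N(T) ->
  #|A :^ l :&: P| = #|A :&: P|.
Proof.
move=> sylP nAT nTl.
have sylQ : p.-Sylow(T) (P :^ l^-1) by rewrite pHallJnorm ?groupV.
have [t Tt defQ] := Sylow_trans sylP sylQ.
rewrite -(cardJg (A :^ l :&: P) l^-1) conjIg conjsgK defQ.
rewrite -(cardJg (A :&: P :^ t) t^-1) conjIg conjsgK.
by rewrite (normP (subsetP nAT _ (groupVr Tt))).
Qed.

(* Counting the points of x ^: L in P through the T-classes partitioning it. *)
Lemma class_count {p L T P} x :
  T <| L -> p.-Sylow(T) P ->
  (#|x ^: L| * #|x ^: T :&: P| = #|x ^: T| * #|x ^: L :&: P|)%N.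
Proof.
case/andP=> sTL nTL sylP.
have actsT : [acts T, on x ^: L | 'J].
  by rewrite astabsJ (subset_trans sTL) ?class_norm.
pose Part := orbit 'J T @: (x ^: L).
have /andP[/eqP coverX /andP[tiX _]] : partition Part (x ^: L).
  exact: orbit_partition actsT.
have classX B : B \in Part -> exists2 l, l \in L & B = (x ^: T) :^ l.
  case/imsetP=> _ /imsetP[l Ll ->] ->; exists l => //.
  by rewrite orbitJ class_conj_norm ?(subsetP nTL).
have cardX : #|x ^: L| = (#|Part| * #|x ^: T|)%N.
  rewrite -[in LHS]coverX -(setIT (cover Part)).
  apply: card_cover_meet => // B /classX[l Ll ->].
  by rewrite setIT cardJg.
have meetX : #|x ^: L :&: P| = (#|Part| * #|x ^: T :&: P|)%N.
  rewrite -[in LHS]coverX; apply: card_cover_meet => // B /classX[l Ll ->].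
  by apply: card_meet_Sylow_conj sylP (class_norm _ _) (subsetP nTL l Ll).
by rewrite cardX meetX mulnCA mulnA.
Qed.

Lemma class_meets_Sylow {p T P x} :
  p.-Sylow(T) P -> x \in T -> p.-elt x -> 0 < #|x ^: T :&: P|.
Proof.
move=> sylP Tx p_x; have sXT : <[x]> \subset T by rewrite cycle_subG.
have [t Tt sXtP] := Sylow_Jsub sylP sXT p_x.
apply/card_gt0P; exists (x ^ t); rewrite inE memJ_class //=.
by apply: (subsetP sXtP); rewrite memJ_conjg cycle_id.
Qed.

End ClassesAndSylow.

Section DirectProductProjections.
Context {gT : finGroupType} {r : nat} {Hs : nat -> {group gT}} {G : {group gT}}.
Hypothesis defG : \big[dprod/1]_(1 <= j < r.+1) Hs j = G.

Lemma head_tail_dprod {i} : (1 <= i <= r.+1)%N ->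
  exists K L : {group gT}, [/\ headp Hs i = K, tailp Hs r i = L & K \x L = G].
Proof.
case/andP=> i1 ir; have := defG; rewrite (big_cat_nat i1 ir) /= => defKL.
have [[K L eK eL] _ _ _] := dprodP defKL.
exists K, L; split; last by rewrite -eK -eL.
- by rewrite /headp (bigdprodW eK).
- by rewrite /tailp (bigdprodW eL).
Qed.

Lemma proj_morph {i} : (1 <= i <= r.+1)%N ->
  {in G &, {morph proj Hs r i : x y / x * y}}.
Proof.
move=> hi; have [K [L [eK eL dKL]]] := head_tail_dprod hi.
have [_ eKL _ tKL] := dprodP dKL; have [nK _] := dprod_normal2 dKL.
by rewrite /proj eK eL; apply: remgrM => //; apply/complP.
Qed.

Definition projm {i} (hi : (1 <= i <= r.+1)%N) : {morphism G >-> gT} :=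
  Morphism (proj_morph hi).

Lemma proj_subG i x : (1 <= i <= r.+1)%N -> x \in G -> proj Hs r i x \in G.
Proof.
move=> hi Gx; have [K [L [eK eL dKL]]] := head_tail_dprod hi.
have [_ eKL _ _] := dprodP dKL; rewrite /proj eK eL -eKL in Gx *.
by rewrite (subsetP (mulG_subr _ _)) ?mem_remgr.
Qed.

Lemma proj1_id {x} : x \in G -> proj Hs r 1 x = x.
Proof.
move=> Gx; have [K [L [eK eL dKL]]] := head_tail_dprod (isT : 1 <= 1 <= r.+1)%N.
have [_ eKL _ tKL] := dprodP dKL; have K1 : K :=: 1 by rewrite -eK /headp big_geq.
rewrite -eKL K1 mul1g in Gx.
by rewrite /proj eK eL remgr_id.
Qed.

Lemma proj_succ {i x} : (1 <= i <= r)%N -> x \in G ->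
  proj Hs r i.+1 (proj Hs r i x) = proj Hs r i.+1 x.
Proof.
case/andP=> i1 ir Gx; have hi : (1 <= i <= r.+1)%N by rewrite i1 ltnW.
have hi1 : (1 <= i.+1 <= r.+1)%N by [].
have [K [L [eK eL dKL]]] := head_tail_dprod hi.
have [_ eKL _ _] := dprodP dKL; have KLx : x \in K * L by rewrite eKL.
have Gd : divgr K L x \in G by rewrite -eKL (subsetP (mulG_subl _ _)) ?mem_divgr.
have Gr : remgr K L x \in G by rewrite -eKL (subsetP (mulG_subr _ _)) ?mem_remgr.
rewrite {2}(divgr_eq K L x) (proj_morph hi1) // /proj eK eL.
have [K' [L' [eK' eL' _]]] := head_tail_dprod hi1.
have sKK' : K \subset K' by rewrite -eK -eK' /headp big_nat_recr //= mulG_subl.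
by rewrite eK' eL' [X in _ = X * _]remgr1 ?mul1g // (subsetP sKK') ?mem_divgr.
Qed.

Context {H : {group gT}}.
Hypothesis sHG : H \subset G.

Lemma Lsub_morphim {i} (hi : (1 <= i <= r.+1)%N) :
  Lsub Hs r H i = projm hi @* H.
Proof. by rewrite /Lsub morphimEsub. Qed.

Lemma Lsub1 : Lsub Hs r H 1 = H.
Proof.
rewrite /Lsub -[RHS]imset_id; apply: eq_in_imset => x Hx.
by rewrite proj1_id ?(subsetP sHG).
Qed.

Lemma Lsub_subG {i} : (1 <= i <= r.+1)%N -> Lsub Hs r H i \subset G.
Proof.
by move=> hi; apply/subsetP=> _ /imsetP[x Hx ->]; rewrite proj_subG ?(subsetP sHG).
Qed.

Lemma Lsub_succ i : (1 <= i <= r)%N ->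
  proj Hs r i.+1 @: Lsub Hs r H i = Lsub Hs r H i.+1.
Proof.
move=> hi; rewrite /Lsub -imset_comp; apply: eq_in_imset => x Hx /=.
by rewrite proj_succ ?(subsetP sHG).
Qed.

Lemma Tker_ker {i} (hi1 : (1 <= i.+1 <= r.+1)%N) : (1 <= i < r)%N ->
  Tker Hs r H i = 'ker_(Lsub Hs r H i) (projm hi1).
Proof.
case/andP=> i1 ir; rewrite /Tker ir; apply/setP=> x; rewrite !inE.
have hi : (1 <= i <= r.+1)%N by rewrite i1 ltnW // ltnW.
by apply: andb_id2l => Lx; rewrite (subsetP (Lsub_subG hi)).
Qed.

Lemma index_cent_step i g : (1 <= i < r)%N -> g \in H -> g ^+ 2 = 1 ->
    odd #|Tker Hs r H i| ->
  #|Lsub Hs r H i : 'C_(Lsub Hs r H i)[proj Hs r i g]| =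
    (#|Tker Hs r H i : 'C_(Tker Hs r H i)[proj Hs r i g]| *
     #|Lsub Hs r H i.+1 : 'C_(Lsub Hs r H i.+1)[proj Hs r i.+1 g]|)%N.
Proof.
move=> hir Hg g2; have /andP[i1 ir] := hir; have Gg := subsetP sHG g Hg.
have hi : (1 <= i <= r.+1)%N by rewrite i1 ltnW // ltnW.
have hi1 : (1 <= i.+1 <= r.+1)%N by rewrite /= ltnS ltnW.
have hir_le : (1 <= i <= r)%N by rewrite i1 ltnW.
have sLG := Lsub_subG hi; rewrite (Lsub_morphim hi) in sLG *.
pose f := restrm sLG (projm hi1).
have kerf : 'ker f = Tker Hs r H i.
  by rewrite ker_restrm (Tker_ker hi1 hir) (Lsub_morphim hi).
have imf : f @* (projm hi @* H) = Lsub Hs r H i.+1.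
  by rewrite im_restrm morphimEsub // -(Lsub_morphim hi) Lsub_succ.
have fg : f (proj Hs r i g) = proj Hs r i.+1 g := proj_succ hir_le Gg.
have Lg : proj Hs r i g \in projm hi @* H := mem_morphim (projm hi) Gg Hg.
have g2' : proj Hs r i g ^+ 2 = 1.
  by rewrite -[proj Hs r i]/(projm hi : _ -> _) -morphX // g2 morph1.
rewrite -kerf -imf -fg => oddK; exact: index_cent_odd_kernel.
Qed.

Lemma Tker_normal {k} (hk : (1 <= k <= r.+1)%N) : (k <= r)%N ->
  exists2 T : {group gT}, Tker Hs r H k = T & T <| projm hk @* H.
Proof.
move=> kr; have [ltkr | lekr] := ltnP k r; last first.
  exists (projm hk @* H)%G; last exact: normal_refl.
  by rewrite /Tker ltnNge lekr (Lsub_morphim hk).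
have hk1 : (1 <= k.+1 <= r.+1)%N by rewrite /= ltnS ltnW.
have hkr : (1 <= k < r)%N by case/andP: hk => -> _.
exists ('ker_(projm hk @* H) (projm hk1))%G.
  by rewrite (Tker_ker hk1 hkr) (Lsub_morphim hk).
apply: normalGI (ker_normal (projm hk1)).
by rewrite /= -(Lsub_morphim hk) Lsub_subG.
Qed.

Lemma proj_in_Tker {k g} : (1 <= k <= r)%N -> g \in H ->
  ((k < r)%N -> proj Hs r k.+1 g = 1) -> proj Hs r k g \in Tker Hs r H k.
Proof.
move=> hkr Hg gk1; have g_k : proj Hs r k g \in Lsub Hs r H k by apply: imset_f.
rewrite /Tker; case: ifP => // ltkr.
by rewrite inE g_k (proj_succ hkr (subsetP sHG g Hg)) gk1 ?eqxx.
Qed.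

Lemma index_cent_last k g (P : {group gT}) :
    (1 <= k <= r)%N -> g \in H -> #[g] = 2%N ->
    ((k < r)%N -> proj Hs r k.+1 g = 1) -> P \in 'Syl_2(Tker Hs r H k) ->
  (#|Lsub Hs r H k : 'C_(Lsub Hs r H k)[proj Hs r k g]|%:R : rat)%R =
    ((#|Tker Hs r H k : 'C_(Tker Hs r H k)[proj Hs r k g]|)%:R *
     ((#|(proj Hs r k g ^: Lsub Hs r H k) :&: P|)%:R /
      (#|(proj Hs r k g ^: Tker Hs r H k) :&: P|)%:R))%R.
Proof.
move=> hkr Hg og gk1; have /andP[k1 kr] := hkr.
have hk : (1 <= k <= r.+1)%N by rewrite k1 ltnW.
have Tg_k := proj_in_Tker hkr Hg gk1.
have [T defT nTL] := Tker_normal hk kr.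
rewrite (Lsub_morphim hk) defT inE !index_cent1 in Tg_k * => sylP.
have p_g : 2.-elt g by rewrite /p_elt og pnat_id.
have p_gk : 2.-elt (proj Hs r k g).
  exact: (morph_p_elt (projm hk) (subsetP sHG g Hg) p_g).
have meet_pos := class_meets_Sylow sylP Tg_k p_gk.
rewrite mulrA -natrM -(class_count _ nTL sylP) natrM mulfK //.
by rewrite Num.Theory.pnatr_eq0 -lt0n.
Qed.

End DirectProductProjections.

Lemma telescope_prod (a b : nat -> nat) (m n : nat) :
  (m <= n)%N -> (forall i, (m <= i < n)%N -> b i = (a i * b i.+1)%N) ->
  b m = (\prod_(m <= i < n) a i * b n)%N.
Proof.
elim: n => [|n IH]; first by rewrite leqn0 => /eqP-> _; rewrite big_geq ?mul1n.
rewrite leq_eqVlt => /predU1P[-> _|lt_mn step]; first by rewrite big_geq ?mul1n.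
rewrite big_nat_recr //= -mulnA -step; last by rewrite -ltnS lt_mn /=.
by apply: IH => // i /andP[le_mi lt_in]; apply: step; rewrite le_mi ltnW.
Qed.

(* Lemma 2.3.  The evenness of |T_k| only serves to single out k; the
   identity holds for any k satisfying the other hypotheses. *)
Theorem lemma2p3 (gT : finGroupType) (r : nat) (Hs : nat -> {group gT})
    (G H : {group gT}) (g : gT) (k : nat) (P : {group gT}) :
  \big[dprod/1]_(1 <= j < r.+1) Hs j = G ->
  H \subset G ->
  g \in H -> #[g] = 2%N ->
  (1 <= k <= r)%N ->
  (forall i : nat, (1 <= i < k)%N -> odd #|Tker Hs r H i|) ->
  ~~ odd #|Tker Hs r H k| ->
  ((k < r)%N -> proj Hs r k.+1 g = 1) ->
  P \in 'Syl_2(Tker Hs r H k) ->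
  ((#|H : 'C_H[g]|)%:R : rat)%R =
    ((\prod_(1 <= i < k.+1)
        (#|Tker Hs r H i : 'C_(Tker Hs r H i)[proj Hs r i g]|)%:R)
    * ((#|(proj Hs r k g ^: Lsub Hs r H k) :&: P|)%:R
       / (#|(proj Hs r k g ^: Tker Hs r H k) :&: P|)%:R))%R.
Proof.
move=> defG sHG Hg og hkr oddT _ gk1 sylP; have /andP[k1 kr] := hkr.
have g2 : g ^+ 2 = 1 by rewrite -og expg_order.
pose a i := #|Tker Hs r H i : 'C_(Tker Hs r H i)[proj Hs r i g]|.
pose b i := #|Lsub Hs r H i : 'C_(Lsub Hs r H i)[proj Hs r i g]|.
have b1 : #|H : 'C_H[g]| = b 1%N.
  by rewrite /b (Lsub1 defG sHG) (proj1_id defG (subsetP sHG g Hg)).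
have telescope : b 1%N = (\prod_(1 <= i < k) a i * b k)%N.
  apply: telescope_prod => // i /andP[i1 ik].
  by apply: (index_cent_step defG sHG); rewrite ?oddT ?i1 ?(leq_trans ik kr).
rewrite b1 telescope natrM natr_prod big_nat_recr //= -mulrA.
by congr (_ * _)%R; apply: (index_cent_last defG sHG).
Qed.
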